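(* Let $(G,\delta)$ be a nilpotent $\mathbb Q$-scalable group of step $s$ that is generated as a group by $\{\delta_q(x_i):q\in\mathbb Q,1\le i\le r\}$ for some $x_1,\dots,x_r\in V_1(G)$. Then the abelian group $G^{(s)}$ is a $\mathbb Q$-vector space (with the group product as addition), where for $s=1$ the scalar multiplication is $\sigma_q=\delta_q$, and for $s\ge2$ the scalar multiplication is the well-defined map $\sigma_{n/m}(z):=\delta_m^{-1}\big(z^{n m^{s-1}}\big)$ ($n\in\mathbb Z$, $m\in\mathbb N$). Moreover, if $s\ge 2$ and $z=[x,w]\in G^{(s)}$ with $x\in V_1(G)$ and $w\in G^{(s-1)}$, then $\sigma_q(z)=[\delta_q(x),w]$ for all $q\in\mathbb Q$.
   Context: A $\mathbb Q$-scalable group is a group $G$ with a map $\delta\colon\mathbb Q\times G\to G$ such that $\delta_\lambda$ is an automorphism for $\lambda\ne0$, $\delta_\lambda\circ\delta_\mu=\delta_{\lambda\mu}$ for $\lambda,\mu\in\mathbb Q$, and $\delta_0\equiv e_G$. $V_1(G):=\{p:\delta_{t+s}(p)=\delta_t(p)\delta_s(p)\ \forall t,s\in\mathbb Q\}$. $[g,h]=ghg^{-1}h^{-1}$; $G^{(1)}=G$, $G^{(k)}=\langle[G,G^{(k-1)}]\rangle$; step $s$ means $G^{(s+1)}=\{e\}\ne G^{(s)}$. A $\mathbb Q$-vector space structure on an abelian group $G$ is a map $\sigma\colon\mathbb Q\times G\to G$ with $\sigma_q\sigma_p=\sigma_{qp}$, $\sigma_q(g)\sigma_p(g)=\sigma_{q+p}(g)$,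 $\sigma_1=\mathrm{id}$, $\sigma_q(g)\sigma_q(h)=\sigma_q(gh)$. *)

From HB Require Import structures.
From mathcomp Require Import all_boot all_order all_algebra.
Set Implicit Arguments. Unset Strict Implicit. Unset Printing Implicit Defensive.
Import Order.TTheory GRing.Theory Num.Theory.
Local Open Scope ring_scope.

Record Grp := {
  carrier :> Type;
  gmul : carrier -> carrier -> carrier;
  ginv : carrier -> carrier;
  gone : carrier;
  gmulA : forall x y z, gmul x (gmul y z) = gmul (gmul x y) z;
  gmul1 : forall x, gmul gone x = x;
  gmulg1 : forall x, gmul x gone = x;
  gmulV : forall x, gmul (ginv x) x = gone;
  gmulgV : forall x, gmul x (ginv x) = gone
}.

Section GroupDefs.
Variable G : Grp.

Definition is_automorphism (f : G -> G) : Prop :=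
  (forall x y, f (gmul x y) = gmul (f x) (f y)) /\ bijective f.

Definition is_Qscalable (delta : rat -> G -> G) : Prop :=
  [/\ (forall l : rat, l != 0 -> is_automorphism (delta l)),
      (forall l m : rat, forall g, delta l (delta m g) = delta (l * m) g)
    & (forall g, delta 0 g = gone G)].

Definition V1 (delta : rat -> G -> G) (p : G) : Prop :=
  forall t s : rat, delta (t + s) p = gmul (delta t p) (delta s p).

Definition comm (g h : G) : G := gmul (gmul (gmul g h) (ginv g)) (ginv h).

Inductive gen (S : G -> Prop) : G -> Prop :=
  | gen_one : gen S (gone G)
  | gen_base : forall x, S x -> gen S x
  | gen_mul : forall x y, gen S x -> gen S y -> gen S (gmul x y)
  | gen_inv : forall x, gen S x -> gen S (ginv x).

(* lcs0 n = G^(n+1) *)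
Fixpoint lcs0 (n : nat) : G -> Prop :=
  match n with
  | 0 => fun _ => True
  | n'.+1 => gen (fun y => exists g h, lcs0 n' h /\ y = comm g h)
  end.

Definition lcs (k : nat) : G -> Prop := lcs0 k.-1.

Definition nilpotent_step (s : nat) : Prop :=
  (1 <= s)%N /\ (forall g, lcs s.+1 g -> g = gone G) /\
  (exists g, lcs s g /\ g <> gone G).

Definition gpow (g : G) (n : int) : G :=
  match n with
  | Posz k => iter k (gmul g) (gone G)
  | Negz k => ginv (iter k.+1 (gmul g) (gone G))
  end.

(* the scalar multiplication of the theorem:
   s = 1 : sigma_q = delta_q ;
   s >= 2: sigma_{n/m}(z) = delta_m^{-1}(z^(n m^(s-1))), computed on the
   reduced representation q = numq q / denq q, with delta_m^{-1} = delta_{1/m}. *)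
Definition sigma (delta : rat -> G -> G) (s : nat) (q : rat) (z : G) : G :=
  if s == 1%N then delta q z
  else delta ((denq q)%:~R)^-1 (gpow z (numq q * denq q ^+ s.-1)).

Definition Qvector_space_on (H : G -> Prop) (sg : rat -> G -> G) : Prop :=
  [/\ (forall q g, H g -> H (sg q g)),
      (forall q p g, H g -> sg q (sg p g) = sg (q * p) g),
      (forall q p g, H g -> gmul (sg q g) (sg p g) = sg (q + p) g),
      (forall g, H g -> sg 1 g = g)
    & (forall q g h, H g -> H h -> gmul (sg q g) (sg q h) = sg q (gmul g h))].

End GroupDefs.

(* Write s = t + 1, so that G^(s) is [lcs0 t].  The iterated commutator
   [y_k, ..., [y_1, h]] with k + n = t is a homomorphism in h on G^(n+1), kills
   G^(n+2) and takes central values; hence it is multiplicative in every slot.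
   On the generators delta_m acts as the m-th power (they lie in V_1), so by
   induction on n, delta_m acts on G^(s) as the power m^s.  Since delta_m is
   injective, b-th roots are unique in G^(s), and sigma_(a/b) z is the unique
   b-th root of z^a in G^(s); every vector space axiom and the commutator formula
   then follow by comparing b-th powers.  For s = 1 the group is abelian, every
   element lies in V_1, and sigma = delta. *)

From HB Require Import structures.
From mathcomp Require Import all_boot all_order all_algebra.
From mathcomp Require Import zify ring.
Import Order.TTheory GRing.Theory Num.Theory.
Set Implicit Arguments. Unset Strict Implicit. Unset Printing Implicit Defensive.
Local Open Scope ring_scope.

Lemma rat_frac (q : rat) : exists a : int, exists2 b : nat, (0 < b)%N & q = a%:~R / b%:R.
Proof.
have := denq_gt0 q; case E: (denq q) => [b|] // b0.
by exists (numq q), b => //; rewrite -[LHS]divq_num_den E.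
Qed.

Section GroupIdentities.
Variable G : Grp.
Implicit Types x y z g h : G.
Local Notation "a ** b" := (@gmul G a b) (at level 40, left associativity).
Local Notation e := (gone G).

Lemma gmulKV x y : x ** y ** ginv y = x.
Proof. by rewrite -gmulA gmulgV gmulg1. Qed.

Lemma gmulVK x y : x ** ginv y ** y = x.
Proof. by rewrite -gmulA gmulV gmulg1. Qed.

Lemma gmulI x : injective (@gmul G x).
Proof. by move=> y z H; rewrite -(gmul1 y) -(gmulV x) -gmulA H gmulA gmulV gmul1. Qed.

Lemma ginv_uniq x y : x ** y = e -> y = ginv x.
Proof. by move=> H; apply: (@gmulI x); rewrite H gmulgV. Qed.

Lemma ginvK x : ginv (ginv x) = x.
Proof. by symmetry; apply: ginv_uniq; rewrite gmulV. Qed.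

Lemma ginvM x y : ginv (x ** y) = ginv y ** ginv x.
Proof. by symmetry; apply: ginv_uniq; rewrite gmulA gmulKV gmulgV. Qed.

Lemma ginv1 : ginv e = e.
Proof. by symmetry; apply: ginv_uniq; rewrite gmul1. Qed.

End GroupIdentities.

Ltac gsimp := repeat progress rewrite ?ginvM ?ginvK ?ginv1 ?gmulA ?gmulKV ?gmulVK
   ?gmulV ?gmulgV ?gmul1 ?gmulg1.

Section Group.
Variable G : Grp.
Implicit Types x y z g h u w : G.
Local Notation "a ** b" := (@gmul G a b) (at level 40, left associativity).
Local Notation e := (gone G).

Lemma comm_mulr y h1 h2 :
  comm y (h1 ** h2) = comm y h1 ** (comm h1 (comm y h2) ** comm y h2).
Proof. by rewrite /comm; gsimp. Qed.

Lemma comm_mull g1 g2 h :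
  comm (g1 ** g2) h = comm g1 (comm g2 h) ** comm g2 h ** comm g1 h.
Proof. by rewrite /comm; gsimp. Qed.

Definition central g := forall x, g ** x = x ** g.

Lemma central_inv g : central g -> central (ginv g).
Proof.
by move=> Hg x; rewrite -{1}(gmulKV (ginv g ** x) g) -(gmulA (ginv g) x g) -Hg; gsimp.
Qed.

Lemma central_mul g h : central g -> central h -> central (g ** h).
Proof. by move=> Hg Hh x; rewrite -gmulA Hh gmulA Hg gmulA. Qed.

Lemma gpow1 g : gpow g 1 = g.
Proof. by rewrite /gpow /= gmulg1. Qed.

Lemma gpowSn g (k : nat) : gpow g k.+1 = g ** gpow g k.
Proof. by []. Qed.

Lemma gpow1n (z : int) : gpow e z = e.
Proof.
have Hnat (k : nat) : gpow e k = e by elim: k => [|k IH] //; rewrite gpowSn IH gmul1.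
by case: z => k; [exact: Hnat | rewrite /gpow -/(gpow e k.+1) Hnat ginv1].
Qed.

Lemma gpowS g (z : int) : gpow g (z + 1) = gpow g z ** g.
Proof.
have gpow_comm (k : nat) : g ** gpow g k = gpow g k ** g.
  by elim: k => [|k IH]; rewrite ?gmul1 ?gmulg1 // gpowSn {1}IH gmulA.
case: z => [k|[|k]].
- have -> : k%:Z + 1 = k.+1 by lia.
  by rewrite gpowSn gpow_comm.
- by rewrite /gpow /=; gsimp.
- have -> : Negz k.+1 + 1 = Negz k by rewrite !NegzE; lia.
  by rewrite /gpow [iter k.+2 _ _]iterS ginvM gmulVK.
Qed.

Lemma gpowD g (a b : int) : gpow g (a + b) = gpow g a ** gpow g b.
Proof.
have gpowB1 (c : int) : gpow g (c - 1) = gpow g c ** ginv g.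
  by have := gpowS g (c - 1); rewrite subrK => ->; rewrite gmulKV.
case: b => k; elim: k => [|k IH].
- by rewrite addr0 gmulg1.
- by rewrite (_ : Posz k.+1 = k%:Z + 1) ?addrA ?gpowS ?IH ?gmulA //; lia.
- by rewrite (_ : Negz 0 = 0 - 1) // add0r gpowB1 /gpow /= gmulg1.
- by rewrite (_ : Negz k.+1 = Negz k - 1) ?addrA ?gpowB1 ?IH ?gmulA // !NegzE; lia.
Qed.

Lemma gpowN g (z : int) : gpow g (- z) = ginv (gpow g z).
Proof. by apply: ginv_uniq; rewrite -gpowD subrr. Qed.

Lemma gpowM g (a b : int) : gpow (gpow g a) b = gpow g (a * b).
Proof.
have gpowMnat (k : nat) : gpow (gpow g a) k = gpow g (a * k).
  elim: k => [|k IH]; first by rewrite mulr0.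
  by rewrite (_ : Posz k.+1 = k%:Z + 1) ?gpowS ?IH ?mulrDr ?mulr1 ?gpowD //; lia.
by case: b => k; rewrite ?NegzE ?gpowN ?mulrN ?gpowN gpowMnat.
Qed.

Lemma gpowAC g (a b : int) : gpow (gpow g a) b = gpow (gpow g b) a.
Proof. by rewrite !gpowM mulrC. Qed.

Lemma central_gpow g (z : int) : central g -> central (gpow g z).
Proof.
move=> Hg; have Hnat (k : nat) : central (gpow g k).
  by elim: k => [|k IH] x; rewrite ?gmul1 ?gmulg1 // gpowSn central_mul.
by case: z => k; [exact: Hnat | exact: central_inv (Hnat k.+1)].
Qed.

Lemma gpowMn g h (z : int) : central g -> gpow (g ** h) z = gpow g z ** gpow h z.
Proof.
move=> Hg; have Hnat (k : nat) : gpow (g ** h) k = gpow g k ** gpow h k.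
  elim: k => [|k IH]; first by rewrite gmulg1.
  rewrite !gpowSn IH -!gmulA; congr (g ** _).
  by rewrite !gmulA (central_gpow k Hg).
case: z => k; first exact: Hnat.
rewrite /gpow -/(gpow (g ** h) k.+1) -/(gpow g k.+1) -/(gpow h k.+1).
by rewrite Hnat ginvM (central_inv (central_gpow k.+1 Hg)).
Qed.

Section Morphism.
Variable f : G -> G.
Hypothesis fM : {morph f : x y / x ** y}.

Lemma morph1 : f e = e.
Proof. by apply: (@gmulI _ (f e)); rewrite -fM !gmulg1. Qed.

Lemma morphV x : f (ginv x) = ginv (f x).
Proof. by apply: ginv_uniq; rewrite -fM gmulgV morph1. Qed.

Lemma morph_gpow x (z : int) : f (gpow x z) = gpow (f x) z.
Proof.
have Hnat (k : nat) : f (gpow x k) = gpow (f x) k.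
  by elim: k => [|k IH]; rewrite ?morph1 // !gpowSn fM IH.
by case: z => k; rewrite ?NegzE ?gpowN ?morphV Hnat.
Qed.

End Morphism.

Lemma gpowVn g (z : int) : gpow (ginv g) z = ginv (gpow g z).
Proof. by rewrite -{1}(gpow1 g) -gpowN gpowM mulN1r gpowN. Qed.

Lemma gen_mono (S T : G -> Prop) x : (forall y, S y -> T y) -> gen S x -> gen T x.
Proof.
move=> ST; elim=> [|y Sy|y z _ IHy _ IHz|y _ IHy].
- exact: gen_one.
- exact/gen_base/ST.
- exact: gen_mul.
- exact: gen_inv.
Qed.

Lemma gen_morph_eq (S : G -> Prop) (f1 f2 : G -> G) :
    {morph f1 : x y / x ** y} -> {morph f2 : x y / x ** y} ->
  (forall y, S y -> f1 y = f2 y) -> forall x, gen S x -> f1 x = f2 x.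
Proof.
move=> f1M f2M Sf x; elim=> [|y Sy|y z _ IHy _ IHz|y _ IHy].
- by rewrite !morph1.
- exact: Sf.
- by rewrite f1M f2M IHy IHz.
- by rewrite (morphV f1M) (morphV f2M) IHy.
Qed.

Lemma lcs0_one n : lcs0 n e.
Proof. by case: n => [|n] //=; apply: gen_one. Qed.

Lemma lcs0_mul n x y : lcs0 n x -> lcs0 n y -> lcs0 n (x ** y).
Proof. by case: n => [|n] //=; apply: gen_mul. Qed.

Lemma lcs0_inv n x : lcs0 n x -> lcs0 n (ginv x).
Proof. by case: n => [|n] //=; apply: gen_inv. Qed.

Lemma lcs0_gpow n x (k : int) : lcs0 n x -> lcs0 n (gpow x k).
Proof.
move=> Hx; have Hnat (j : nat) : lcs0 n (gpow x j).
  by elim: j => [|j IH]; [exact: lcs0_one | exact: lcs0_mul].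
by case: k => j; [exact: Hnat | exact: lcs0_inv (Hnat j.+1)].
Qed.

Lemma lcs0_comm n g h : lcs0 n h -> lcs0 n.+1 (comm g h).
Proof. by move=> Hh /=; apply: gen_base; exists g, h. Qed.

Lemma lcs0S n x : lcs0 n.+1 x -> lcs0 n x.
Proof.
elim: n x => [|n IH] x //= Hx.
apply: gen_mono Hx => _ [g [h [Hh ->]]].
by exists g, h; split => //; apply: IH.
Qed.

Lemma lcs0_morph n (f : G -> G) : {morph f : x y / x ** y} ->
  forall x, lcs0 n x -> lcs0 n (f x).
Proof.
move=> fM; elim: n => [|n IH] // x /=.
elim=> [|y Hy|y z _ IHy _ IHz|y _ IHy].
- by rewrite morph1 //; apply: gen_one.
- case: Hy => g [h [Hh ->]]; apply: gen_base; exists (f g), (f h).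
  by split; [exact: IH | rewrite /comm !fM !(morphV fM)].
- by rewrite fM; apply: gen_mul.
- by rewrite (morphV fM); apply: gen_inv.
Qed.

Section Nilpotent.
Variable t : nat.
Hypothesis lcs0_trivial : forall x, lcs0 t.+1 x -> x = e.

Lemma lcs0_central z : lcs0 t z -> central z.
Proof.
move=> Hz g; have := lcs0_trivial (lcs0_comm g Hz); rewrite /comm => H.
by have := f_equal (fun u => u ** z ** g) H; rewrite gmul1; gsimp.
Qed.

(* [icomm [:: y1; ...; yk] h] is the left-normed commutator [yk, [..., [y1, h]]]. *)
Definition icomm (ys : seq G) h := foldl (fun acc y => comm y acc) h ys.

Lemma icomm_lcs0 ys n h : lcs0 n h -> lcs0 (size ys + n) (icomm ys h).
Proof.
elim: ys n h => [|y ys IH] n h // Hh.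
by have := IH n.+1 _ (lcs0_comm y Hh); rewrite addnS.
Qed.

Lemma icomm_trivial ys n h : (size ys + n)%N = t -> lcs0 n.+1 h -> icomm ys h = e.
Proof. by move=> Hn Hh; apply/lcs0_trivial; rewrite -Hn -addnS; apply: icomm_lcs0. Qed.

Lemma icomm_central ys n h : (size ys + n)%N = t -> lcs0 n h -> central (icomm ys h).
Proof. by move=> Hn Hh; apply/lcs0_central; rewrite -Hn; apply: icomm_lcs0. Qed.

Lemma icommM ys n h1 h2 : (size ys + n)%N = t -> lcs0 n h1 -> lcs0 n h2 ->
  icomm ys (h1 ** h2) = icomm ys h1 ** icomm ys h2.
Proof.
elim: ys n h1 h2 => [|y ys IH] n h1 h2 //= Hn H1 H2.
rewrite addSnnS in Hn; rewrite comm_mulr.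
have Hc2 : lcs0 n.+1 (comm y h2) by apply: lcs0_comm.
have Hc12 : lcs0 n.+2 (comm h1 (comm y h2)) by apply: lcs0_comm.
rewrite (IH n.+1 _ _ Hn (lcs0_comm y H1)); last exact: lcs0_mul (lcs0S Hc12) Hc2.
by rewrite (IH n.+1 _ _ Hn (lcs0S Hc12) Hc2) (icomm_trivial Hn Hc12) gmul1.
Qed.

Lemma icomm1 ys n : (size ys + n)%N = t -> icomm ys e = e.
Proof. by move=> Hn; apply: (icomm_trivial Hn); apply: lcs0_one. Qed.

Lemma icommV ys n h : (size ys + n)%N = t -> lcs0 n h -> icomm ys (ginv h) = ginv (icomm ys h).
Proof.
move=> Hn Hh; apply: ginv_uniq.
by rewrite -(icommM Hn Hh (lcs0_inv Hh)) gmulgV (icomm1 Hn).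
Qed.

Lemma icomm_comml_morph ys n h : (size ys + n.+1)%N = t -> lcs0 n h ->
  {morph (fun g => icomm ys (comm g h)) : g1 g2 / g1 ** g2}.
Proof.
move=> Hn Hh g1 g2 /=; rewrite comm_mull.
have Hc1 : lcs0 n.+1 (comm g1 h) by apply: lcs0_comm.
have Hc2 : lcs0 n.+1 (comm g2 h) by apply: lcs0_comm.
have Hc12 : lcs0 n.+2 (comm g1 (comm g2 h)) by apply: lcs0_comm.
rewrite (icommM Hn (lcs0_mul (lcs0S Hc12) Hc2) Hc1) (icommM Hn (lcs0S Hc12) Hc2).
by rewrite (icomm_trivial Hn Hc12) gmul1 (icomm_central Hn Hc2).
Qed.

End Nilpotent.

Section Scaling.
Variable delta : rat -> G -> G.
Hypothesis delta_Qscalable : is_Qscalable delta.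

Lemma delta_morph l : {morph delta l : x y / x ** y}.
Proof.
case: delta_Qscalable => Haut _ H0 x y.
have [->|l0] := eqVneq l 0; first by rewrite !H0 gmulg1.
by case: (Haut l l0) => ->.
Qed.

Lemma delta_inj l : l != 0 -> injective (delta l).
Proof. by case: delta_Qscalable => Haut _ _ l0; case: (Haut l l0) => _ /bij_inj. Qed.

Lemma deltaM l m g : delta l (delta m g) = delta (l * m) g.
Proof. by case: delta_Qscalable. Qed.

Lemma delta0 g : delta 0 g = e.
Proof. by case: delta_Qscalable. Qed.

Lemma delta1 g : delta 1 g = g.
Proof. by apply: (@delta_inj 1) => //; rewrite deltaM mulr1. Qed.

Lemma delta_comm l g h : delta l (comm g h) = comm (delta l g) (delta l h).
Proof. by rewrite /comm !delta_morph !(morphV (delta_morph l)). Qed.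

Lemma lcs0_delta n l g : lcs0 n g -> lcs0 n (delta l g).
Proof. exact: lcs0_morph (delta_morph l) g. Qed.

Lemma V1_delta q y : V1 delta y -> V1 delta (delta q y).
Proof. by move=> Hy a b; rewrite !deltaM mulrDl Hy. Qed.

Lemma V1_int y : V1 delta y -> forall z : int, delta z%:~R y = gpow y z.
Proof.
move=> Hy; have Hnat (m : nat) : delta m%:R y = gpow y m.
  elim: m => [|m IH]; first by rewrite delta0.
  by rewrite -natr1 Hy IH delta1 -gpowS; congr gpow; lia.
case=> k; first exact: Hnat.
rewrite NegzE gpowN -Hnat rmorphN /=; apply: ginv_uniq.
by rewrite -Hy subrr delta0.
Qed.

Section Generated.
Variable S : G -> Prop.
Hypothesis V1_S : forall y, S y -> V1 delta y.
Hypothesis gen_S : forall g, gen S g.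

Lemma V1_abelian : (forall g, central g) -> forall g, V1 delta g.
Proof.
move=> Gab g a b.
apply: (gen_morph_eq (f2 := fun g => delta a g ** delta b g) _ _ _ (gen_S g)).
- exact: delta_morph.
- by move=> x y; rewrite !delta_morph -!gmulA [delta a y ** _]gmulA (Gab (delta a y)) !gmulA.
- by move=> y /V1_S; apply.
Qed.

Lemma morph_delta_nat (f : G -> G) (m : nat) : {morph f : x y / x ** y} ->
  (forall g, central (f g)) -> forall g, f (delta m%:R g) = gpow (f g) m.
Proof.
move=> fM fC g.
apply: (gen_morph_eq (f1 := f \o delta m%:R) (f2 := fun g => gpow (f g) m) _ _ _ (gen_S g)).
- by move=> x y; rewrite /= delta_morph fM.
- by move=> x y; rewrite fM gpowMn.
- by move=> y /V1_S Hy; rewrite -(morph_gpow fM) -(V1_int Hy m).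
Qed.

Section NilpotentGenerated.
Variable t : nat.
Hypothesis lcs0_trivial : forall x, lcs0 t.+1 x -> x = e.

Lemma icomm_delta_nat n ys h (m : nat) : (size ys + n)%N = t -> lcs0 n h ->
  icomm ys (delta m%:R h) = gpow (icomm ys h) (m%:Z ^+ n.+1).
Proof.
elim: n ys h => [|n IH] ys h Hn Hh.
  rewrite expr1; apply: morph_delta_nat => [x y|g]; first exact: (icommM lcs0_trivial Hn).
  exact: (icomm_central lcs0_trivial Hn).
have icommC u : lcs0 n.+1 u -> central (icomm ys u) := icomm_central lcs0_trivial Hn.
have {Hh} : gen (fun y => exists g h, lcs0 n h /\ y = comm g h) h := Hh.
elim=> [|_ [g [h' [Hh' ->]]]|a b Ha IHa Hb IHb|a Ha IHa].
- by rewrite (morph1 (delta_morph _)) (icomm1 lcs0_trivial Hn) gpow1n.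
- have Hh'' := lcs0_delta m%:R Hh'.
  have Hcomm := icomm_comml_morph lcs0_trivial Hn Hh''.
  rewrite delta_comm (morph_delta_nat m Hcomm) => [|x]; last exact/icommC/lcs0_comm.
  (* The slot of [g] contributes the factor [m], the induction hypothesis the rest. *)
  have Hn' : (size (g :: ys) + n)%N = t by rewrite -Hn addSnnS.
  by rewrite -[icomm ys _]/(icomm (g :: ys) _) IH // gpowM -exprSr.
- have Ha' := lcs0_delta m%:R (Ha : lcs0 n.+1 a).
  have Hb' := lcs0_delta m%:R (Hb : lcs0 n.+1 b).
  rewrite delta_morph !(icommM lcs0_trivial Hn) // IHa IHb gpowMn //.
  exact: icommC.
- have Ha' := lcs0_delta m%:R (Ha : lcs0 n.+1 a).
  by rewrite (morphV (delta_morph _)) !(icommV lcs0_trivial Hn) // IHa gpowVn.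
Qed.

Lemma delta_nat_top z (m : nat) : lcs0 t z -> delta m%:R z = gpow z (m%:Z ^+ t.+1).
Proof. exact: (@icomm_delta_nat t [::]). Qed.

Local Notation T := (lcs0 t).

Lemma top_root_uniq (b : int) w u : 0 < b -> T w -> T u -> gpow w b = gpow u b -> w = u.
Proof.
case: b => // k; rewrite ltz_nat => k0 Tw Tu Hwu.
apply: (@delta_inj k%:R); first by rewrite pnatr_eq0 -lt0n.
by rewrite !delta_nat_top // exprS -!gpowM Hwu.
Qed.

Section Sigma.
Hypothesis t_gt0 : (0 < t)%N.
Local Notation sg := (sigma delta t.+1).

Lemma sigmaE q z : sg q z = delta (denq q)%:~R^-1 (gpow z (numq q * denq q ^+ t)).
Proof. by rewrite /sigma gtn_eqF. Qed.

Lemma lcs0_sigma q z : T z -> T (sg q z).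
Proof. by move=> Tz; rewrite sigmaE; apply/lcs0_delta/lcs0_gpow. Qed.

Lemma sigma_central q z : T z -> central (sg q z).
Proof. by move=> Tz; apply: (lcs0_central lcs0_trivial); apply: lcs0_sigma. Qed.

Lemma sigma_gpow_den q z : T z -> gpow (sg q z) (denq q) = gpow z (numq q).
Proof.
move=> Tz; have d0 := denq_gt0 q.
apply: (@top_root_uniq (denq q ^+ t)).
- exact: exprn_gt0.
- exact/lcs0_gpow/lcs0_sigma.
- exact: lcs0_gpow.
have [k Hk] : exists k : nat, denq q = k by case: (denq q) d0 => // k _; exists k.
have k0 : (k%:R : rat) != 0 by rewrite pnatr_eq0 -lt0n -ltz_nat -Hk.
rewrite gpowM -exprS Hk -delta_nat_top; last exact: lcs0_sigma.
by rewrite sigmaE Hk deltaM mulfV // delta1 gpowM.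
Qed.

Lemma sigma_gpow q z (a : int) (b : nat) : (0 < b)%N -> q = a%:~R / b%:R -> T z ->
  gpow (sg q z) b = gpow z a.
Proof.
move=> b0 Hq Tz.
have Hcross : numq q * b = a * denq q.
  apply: (@intr_inj rat); rewrite !rmorphM /= numqE {1}Hq.
  by field; rewrite pnatr_eq0 -lt0n.
apply: (@top_root_uniq (denq q)).
- exact: denq_gt0.
- exact/lcs0_gpow/lcs0_sigma.
- exact: lcs0_gpow.
by rewrite gpowAC sigma_gpow_den // !gpowM Hcross.
Qed.

Lemma sigma_uniq q z w (a : int) (b : nat) : (0 < b)%N -> q = a%:~R / b%:R ->
  T z -> T w -> gpow w b = gpow z a -> sg q z = w.
Proof.
move=> b0 Hq Tz Tw Hw; apply: (@top_root_uniq b) => //; first exact: lcs0_sigma.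
by rewrite (sigma_gpow b0 Hq Tz) Hw.
Qed.

Lemma delta_sigma_frac (n : int) (m : nat) z : (0 < m)%N -> T z ->
  delta m%:R (sg (n%:~R / m%:R) z) = gpow z (n * m%:Z ^+ t).
Proof.
move=> m0 Tz; rewrite delta_nat_top; last exact: lcs0_sigma.
by rewrite exprS -gpowM (sigma_gpow m0 (erefl _) Tz) gpowM.
Qed.

Lemma sigma_Qvector_space : Qvector_space_on T sg.
Proof.
split.
- by move=> q g Tg; apply: lcs0_sigma.
- move=> q p g Tg.
  have [aq [bq bq0 Hq]] := rat_frac q; have [ap [bp bp0 Hp]] := rat_frac p.
  symmetry; apply: (@sigma_uniq _ _ _ (aq * ap) (bq * bp)) => //.
  + by rewrite muln_gt0 bq0.
  + by rewrite Hq Hp rmorphM /= natrM; field; rewrite !pnatr_eq0 -!lt0n bq0 bp0.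
  + by do 2 apply: lcs0_sigma.
  + rewrite PoszM -gpowM (sigma_gpow bq0 Hq (lcs0_sigma p Tg)).
    by rewrite gpowAC (sigma_gpow bp0 Hp) // gpowM mulrC.
- move=> q p g Tg.
  have [aq [bq bq0 Hq]] := rat_frac q; have [ap [bp bp0 Hp]] := rat_frac p.
  symmetry; apply: (@sigma_uniq _ _ _ (aq * bp + ap * bq) (bq * bp)) => //.
  + by rewrite muln_gt0 bq0.
  + rewrite Hq Hp natrM rmorphD !rmorphM /=.
    by field; rewrite !pnatr_eq0 -!lt0n bq0 bp0.
  + by apply: lcs0_mul; apply: lcs0_sigma.
  + rewrite (gpowMn _ _ (sigma_central q Tg)).
    rewrite PoszM -!gpowM (sigma_gpow bq0 Hq Tg) (gpowAC (sg p g)).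
    by rewrite (sigma_gpow bp0 Hp Tg) !gpowM gpowD.
- by move=> g Tg; apply: (@sigma_uniq _ _ _ 1 1).
- move=> q g h Tg Th; have [a [b b0 Hq]] := rat_frac q.
  symmetry; apply: (@sigma_uniq _ _ _ a b) => //.
  + exact: lcs0_mul.
  + by apply: lcs0_mul; apply: lcs0_sigma.
  rewrite (gpowMn _ _ (sigma_central q Tg)) (gpowMn _ _ (lcs0_central lcs0_trivial Tg)).
  by rewrite (sigma_gpow b0 Hq Tg) (sigma_gpow b0 Hq Th).
Qed.

Lemma sigma_comm x w q : V1 delta x -> lcs0 t.-1 w -> sg q (comm x w) = comm (delta q x) w.
Proof.
move=> Vx Hw; have [a [b b0 Hq]] := rat_frac q.
have Ht : (size ([::] : seq G) + t.-1.+1)%N = t by rewrite add0n (prednK t_gt0).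
have Tc g : T (comm g w) by rewrite -Ht; apply: lcs0_comm.
have commM := icomm_comml_morph lcs0_trivial Ht Hw.
apply: (sigma_uniq b0 Hq (Tc _) (Tc _)).
rewrite -!(morph_gpow commM) -(V1_int (V1_delta q Vx)) deltaM -(V1_int Vx).
by rewrite Hq mulrC divfK // pnatr_eq0 -lt0n.
Qed.

End Sigma.

End NilpotentGenerated.

Lemma sigma1_Qvector_space : (forall x, lcs0 1 x -> x = e) ->
  Qvector_space_on (lcs 1) (sigma delta 1).
Proof.
move=> lcs0_trivial; have V1G := V1_abelian (fun g => lcs0_central lcs0_trivial (z := g) I).
split=> //.
- by move=> q p g _; rewrite /sigma /= deltaM.
- by move=> q p g _; rewrite /sigma /= (V1G g).
- by move=> g _; rewrite /sigma /= delta1.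
- by move=> q g h _ _; rewrite /sigma /= delta_morph.
Qed.

End Generated.

End Scaling.

End Group.

Theorem mainTheorem5 (G : Grp) (delta : rat -> G -> G) (s r : nat)
    (x : 'I_r -> G) :
  is_Qscalable delta ->
  nilpotent_step G s ->
  (forall i, V1 delta (x i)) ->
  (forall g : G, gen (fun y => exists (q : rat) (i : 'I_r), y = delta q (x i)) g) ->
  [/\ (forall g h, @lcs G s g -> @lcs G s h -> gmul g h = gmul h g),
      ((2 <= s)%N -> forall (n : int) (m : nat), (0 < m)%N ->
         forall z, @lcs G s z ->
         delta m%:R (sigma delta s (n%:~R / m%:R) z) = gpow z (n * (m%:Z) ^+ s.-1)),
      Qvector_space_on (@lcs G s) (sigma delta s)
    & ((2 <= s)%N -> forall xx w, V1 delta xx -> @lcs G s.-1 w ->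
         forall q : rat, sigma delta s q (comm xx w) = comm (delta q xx) w)].
Proof.
move=> HQ [s_gt0 [lcs_trivial _]] V1x gen_x.
have V1_gens y : (exists q i, y = delta q (x i)) -> V1 delta y.
  by case=> q [i ->]; apply: V1_delta.
case: s s_gt0 lcs_trivial => [//|t] _ lcs_trivial.
split.
- by move=> g h Hg _; apply: (lcs0_central lcs_trivial Hg).
- by move=> t_gt0 n m m0 z; apply: (delta_sigma_frac HQ V1_gens gen_x lcs_trivial t_gt0).
- case: t lcs_trivial => [|t] lcs_trivial.
    exact: (sigma1_Qvector_space HQ V1_gens gen_x lcs_trivial).
  exact: (sigma_Qvector_space HQ V1_gens gen_x lcs_trivial).
- by move=> t_gt0 y w V1y Hw q; apply: (sigma_comm HQ V1_gens gen_x lcs_trivial t_gt0).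
Qed.
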